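(* Let $N\in\mathbb{N}$. Let $$\mathcal{B}'(N)=\{(q_1',q_2')\in\mathbb{Z}^2 \mid q_1'+q_2' \text{ is even and } 2q_1'^2+2q_2'^2-2q_1'-q_2'=N\},$$ let $\mathcal{U}(8N+5)=\{(x,y)\in\mathbb{Z}^2\mid x^2+y^2=8N+5\}$, and let $\varphi:\mathcal{B}'(N)\to\mathcal{U}(8N+5)$ be the (well-defined) map $\varphi(q_1',q_2')=(4q_1'-2,\,4q_2'-1)$. Let the dihedral group $D_8=\langle r,s\mid r^4=s^2=(rs)^2=1\rangle$ act on $\mathcal{U}(8N+5)$ by $r(x,y)=(-y,x)$ and $s(x,y)=(y,x)$. Then: (1) the action of $D_8$ on $\mathcal{U}(8N+5)$ is free; (2) the image $\varphi(\mathcal{B}'(N))$ is a complete set of representatives of the $D_8$-orbits of $\mathcal{U}(8N+5)$.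
   Context: The set $\mathcal{B}'(N)$ is the image, under the isometry $u$ of $\mathbb{R}^2$ with matrix $\frac{1}{\sqrt2}\begin{pmatrix}1&1\\1&-1\end{pmatrix}$, of the set of elements of the lattice $M=\sqrt2\mathbb{Z}\varepsilon_1\oplus\sqrt2\mathbb{Z}\varepsilon_2$ of type $C_2^{(1)}$ with $\Lambda_0$-atomic length $N$ (equivalently, affine Grassmannian elements of type $C_2^{(1)}$, in bijection with self-conjugate $4$-cores of size $N$); the defining quadratic expression is that atomic length written in the coordinates $(q_1',q_2')$. *)

From Stdlib Require Import ZArith Lia.
Open Scope Z_scope.

Definition inB' (N : Z) (q : Z * Z) : Prop :=
  Z.Even (fst q + snd q) /\
  2 * fst q ^ 2 + 2 * snd q ^ 2 - 2 * fst q - snd q = N.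

Definition inU (m : Z) (u : Z * Z) : Prop := fst u ^ 2 + snd u ^ 2 = m.

Definition phi (q : Z * Z) : Z * Z := (4 * fst q - 2, 4 * snd q - 1).

Definition rot (u : Z * Z) : Z * Z := (- snd u, fst u).
Definition swp (u : Z * Z) : Z * Z := (snd u, fst u).

(* The eight elements of D_8 = <r, s | r^4 = s^2 = (rs)^2 = 1>,
   written in normal form r^k s^e with 0 <= k < 4, e in {0,1}. *)
Inductive rpow := R0 | R1 | R2 | R3.
Definition D8 := (rpow * bool)%type.
Definition D8_one : D8 := (R0, false).

Definition rpow_nat (k : rpow) : nat :=
  match k with R0 => 0 | R1 => 1 | R2 => 2 | R3 => 3 end.

Definition act (g : D8) (u : Z * Z) : Z * Z :=
  Nat.iter (rpow_nat (fst g)) rot (if snd g then swp u else u).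

Definition same_orbit (u v : Z * Z) : Prop := exists g : D8, act g u = v.

(* Squares are 0, 1 or 4 mod 8, so a point of U(8N+5) has one coordinate congruent
   to 2 mod 4 and the other odd.  Hence no coordinate vanishes and |x| <> |y|, which
   makes the action free, and the orbit of a point consists of the sign changes of
   the point and of its swap.  Exactly one of these is "reduced" (first coordinate
   2 mod 4, coordinate sum 5 mod 8), and the reduced points are precisely phi(B'(N))
   since 4(q1+q2) - 3 = 5 mod 8 iff q1 + q2 is even. *)
From Stdlib Require Import ZArith Lia.
Open Scope Z_scope.

Definition reduced (u : Z * Z) : Prop :=
  fst u mod 4 = 2 /\ (fst u + snd u) mod 8 = 5.

Lemma inU_phi (n : Z) (q : Z * Z) :
  inU (8 * n + 5) (phi q) <-> 2 * fst q ^ 2 + 2 * snd q ^ 2 - 2 * fst q - snd q = n.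
Proof.
  destruct q as [a b]; unfold inU, phi; cbn [fst snd].
  assert (E : (4 * a - 2) ^ 2 + (4 * b - 1) ^ 2
              = 8 * (2 * a ^ 2 + 2 * b ^ 2 - 2 * a - b) + 5) by ring.
  rewrite E; lia.
Qed.

Lemma reduced_phi (q : Z * Z) : Z.Even (fst q + snd q) -> reduced (phi q).
Proof.
  destruct q as [a b]; intros [k Hk]; unfold reduced, phi; cbn [fst snd] in *.
  Z.to_euclidean_division_equations; lia.
Qed.

Lemma reduced_phi_surj (u : Z * Z) :
  reduced u -> exists q, Z.Even (fst q + snd q) /\ phi q = u.
Proof.
  destruct u as [x y]; unfold reduced; cbn [fst snd]; intros [Hx Hxy].
  exists ((x + 2) / 4, (y + 1) / 4); cbn [fst snd]; split.
  - exists ((x + y + 3) / 8); Z.to_euclidean_division_equations; lia.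
  - unfold phi; cbn [fst snd]; f_equal; Z.to_euclidean_division_equations; lia.
Qed.

Lemma Z_mod4_cases (x : Z) :
  exists i, x = 4 * i \/ x = 4 * i + 1 \/ x = 4 * i + 2 \/ x = 4 * i + 3.
Proof. exists (x / 4); Z.to_euclidean_division_equations; lia. Qed.

Lemma sum_two_squares_8n5 (x y n : Z) :
  x ^ 2 + y ^ 2 = 8 * n + 5 ->
  (x mod 4 = 2 /\ y mod 2 = 1) \/ (x mod 2 = 1 /\ y mod 4 = 2).
Proof.
  destruct (Z_mod4_cases x) as [i Hx], (Z_mod4_cases y) as [j Hy].
  intros H; destruct Hx as [-> | [-> | [-> | ->]]], Hy as [-> | [-> | [-> | ->]]];
    first [ left; split; Z.to_euclidean_division_equations; lia
          | right; split; Z.to_euclidean_division_equations; lia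
          | exfalso; nia ].
Qed.

Ltac simpl_act := cbv [act Nat.iter nat_rect rpow_nat fst snd rot swp].

Lemma act_fixed_axis_or_diagonal (g : D8) (x y : Z) :
  act g (x, y) = (x, y) -> g = D8_one \/ x = 0 \/ y = 0 \/ x = y \/ x = - y.
Proof.
  unfold D8_one; destruct g as [[| | |] []]; simpl_act; intros Hg;
    [| left; reflexivity |..]; injection Hg; lia.
Qed.

Lemma act_free_8n5 (n : Z) (g : D8) (u : Z * Z) :
  inU (8 * n + 5) u -> act g u = u -> g = D8_one.
Proof.
  destruct u as [x y]; unfold inU; cbn [fst snd]; intros Hu Hg.
  destruct (act_fixed_axis_or_diagonal g x y Hg) as [-> | Hxy]; [reflexivity |].
  exfalso; destruct (sum_two_squares_8n5 x y n Hu);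
    Z.to_euclidean_division_equations; lia.
Qed.

Lemma inU_act (m : Z) (g : D8) (u : Z * Z) : inU m u -> inU m (act g u).
Proof. destruct u as [x y], g as [[| | |] []]; unfold inU; simpl_act; lia. Qed.

Lemma same_orbit_abs (x y a b : Z) :
  Z.abs a = Z.abs x -> Z.abs b = Z.abs y ->
  same_orbit (x, y) (a, b) /\ same_orbit (y, x) (a, b).
Proof.
  intros [-> | ->]%Z.abs_eq_cases [-> | ->]%Z.abs_eq_cases.
  - split; [exists (R0, false) | exists (R0, true)]; simpl_act; f_equal; lia.
  - split; [exists (R3, true) | exists (R3, false)]; simpl_act; f_equal; lia.
  - split; [exists (R1, true) | exists (R1, false)]; simpl_act; f_equal; lia.
  - split; [exists (R2, false) | exists (R2, true)]; simpl_act; f_equal; lia.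
Qed.

Lemma reduced_sign_change (x y : Z) :
  x mod 4 = 2 -> y mod 2 = 1 ->
  exists a b, Z.abs a = Z.abs x /\ Z.abs b = Z.abs y /\ reduced (a, b).
Proof.
  intros Hx Hy; unfold reduced; cbn [fst snd].
  assert (Hsum : (x + y) mod 8 = 5 \/ (x - y) mod 8 = 5 \/
                 (- x + y) mod 8 = 5 \/ (- x - y) mod 8 = 5)
    by (Z.to_euclidean_division_equations; lia).
  destruct Hsum as [H | [H | [H | H]]];
    [exists x, y | exists x, (- y) | exists (- x), y | exists (- x), (- y)];
    (split; [| split; [| split]]); Z.to_euclidean_division_equations; lia.
Qed.

Lemma exists_reduced_in_orbit (n : Z) (u : Z * Z) :
  inU (8 * n + 5) u -> exists v, reduced v /\ same_orbit u v.
Proof.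
  destruct u as [x y]; unfold inU; cbn [fst snd]; intros Hu.
  destruct (sum_two_squares_8n5 x y n Hu) as [[Hx Hy] | [Hx Hy]].
  - destruct (reduced_sign_change x y Hx Hy) as (a & b & Ha & Hb & Hab).
    exists (a, b); split; [exact Hab | exact (proj1 (same_orbit_abs x y a b Ha Hb))].
  - destruct (reduced_sign_change y x Hy Hx) as (a & b & Ha & Hb & Hab).
    exists (a, b); split; [exact Hab | exact (proj2 (same_orbit_abs y x a b Ha Hb))].
Qed.

Lemma reduced_act (g : D8) (u : Z * Z) : reduced u -> reduced (act g u) -> act g u = u.
Proof.
  destruct u as [x y], g as [[| | |] []]; unfold reduced; simpl_act; intros Hu Hg;
    try reflexivity; exfalso; Z.to_euclidean_division_equations; lia.
Qed.

Theorem theorem8p8 (N : nat) :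
  let M := 8 * Z.of_nat N + 5 in
  (* phi is well defined: B'(N) -> U(8N+5) *)
  (forall q, inB' (Z.of_nat N) q -> inU M (phi q)) /\
  (* (1) the action of D_8 on U(8N+5) is free *)
  (forall (g : D8) (u : Z * Z), inU M u -> act g u = u -> g = D8_one) /\
  (* (2) phi(B'(N)) is a complete set of representatives of the orbits *)
  (forall u, inU M u -> exists q, inB' (Z.of_nat N) q /\ same_orbit u (phi q)) /\
  (forall q1 q2, inB' (Z.of_nat N) q1 -> inB' (Z.of_nat N) q2 ->
     same_orbit (phi q1) (phi q2) -> phi q1 = phi q2).
Proof.
  intros M; subst M; generalize (Z.of_nat N) as n; intros n.
  split; [| split; [| split]].
  - intros q [_ Hq]; apply inU_phi; exact Hq.
  - apply act_free_8n5.
  - intros u Hu.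
    destruct (exists_reduced_in_orbit n u Hu) as (v & Hv & g & Hgv).
    destruct (reduced_phi_surj v Hv) as (q & Heven & <-).
    exists q; split; [| exists g; exact Hgv].
    split; [exact Heven | apply inU_phi; rewrite <- Hgv; apply inU_act, Hu].
  - intros q1 q2 [Heven1 _] [Heven2 _] [g Hg].
    rewrite <- Hg; symmetry; apply reduced_act.
    + apply reduced_phi, Heven1.
    + rewrite Hg; apply reduced_phi, Heven2.
Qed.
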